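(* For every $\lambda\in\Lambda$ one has $W_\lambda=\bigcap_{i=0}^{r+1}\mathrm{Stab}(R_i^\lambda)$, where $\mathrm{Stab}(X)=\{g\in W\mid g(X)=X\}$ for $X\subseteq\mathbb{Z}$.
   Context: Fix integers $r\ge 0$, $d\ge 2$, set $D=2d+2$. Let $W$ be the group of bijections $g:\mathbb{Z}\to\mathbb{Z}$ with $g(i+D)=g(i)+D$, $g(-i)=-g(i)$ for all $i$; it is a Coxeter group with simple reflections $s_0,\dots,s_d$ where ($W$-elements being determined by their values on $1,\dots,d$) $s_0(1)=-1$, $s_0(k)=k$ ($2\le k\le d$); $s_d(d)=d+2$, $s_d(k)=k$ ($k<d$); and $s_i$ ($1\le i\le d-1$) swaps $i,i+1$ and fixes the other $k\in[1..d]$. Let $\Lambda$ be the set of $\lambda=(\lambda_0,\dots,\lambda_{r+1})\in\mathbb{N}^{r+2}$ with $\sum\lambda_i=d$; put $\lambda_{0,i}=\lambda_0+\dots+\lambda_i$. $W_\lambda$ is the subgroup generated by $\{s_0,\dots,s_d\}\setminus\{s_{\lambda_{0,0}},s_{\lambda_{0,1}},\dots,s_{\lambda_{0,r}}\}$. Define integer intervals $R_0^\lambda=[-\lambda_0..\lambda_0]$, $R_i^\lambda=(\lambda_{0,i-1}..\lambda_{0,i}]$ for $1\le i\le r$, $R^\lambda_{r+1}=[d+1-\lambda_{r+1}..d+1+\lambda_{r+1}]$ (here $[a..b]$, $(a..b]$ denote integer intervals). *)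

From Stdlib Require Import ZArith List Lia.
Import ListNotations.
Open Scope Z_scope.

Definition DD (d : Z) : Z := 2 * d + 2.

Definition inW (d : Z) (g : Z -> Z) : Prop :=
  (forall x y, g x = g y -> x = y) /\
  (forall y, exists x, g x = y) /\
  (forall i, g (i + DD d) = g i + DD d) /\
  (forall i, g (- i) = - g i).

(* The unique element of W whose values on 1..d are given by f:
   g(0)=0, g(d+1)=d+1, g(k)=f(k) for 1<=k<=d, g(D-k)=D-f(k) for 1<=k<=d,
   extended D-periodically (g(x+D)=g(x)+D). *)
Definition ext (d : Z) (f : Z -> Z) (x : Z) : Z :=
  let q := x / DD d in
  let r := x mod DD d in
  q * DD d +
  (if r =? 0 then 0
   else if r <=? d then f r
   else if r =? d + 1 then d + 1
   else DD d - f (DD d - r)).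

Definition sref (d : Z) (j : Z) : Z -> Z :=
  if j =? 0 then ext d (fun k => if k =? 1 then -1 else k)
  else if j =? d then ext d (fun k => if k =? d then d + 2 else k)
  else ext d (fun k => if k =? j then j + 1 else if k =? j + 1 then j else k).

Inductive gen (d : Z) (Gens : (Z -> Z) -> Prop) : (Z -> Z) -> Prop :=
| gen_gen g : Gens g -> gen d Gens g
| gen_id : gen d Gens (fun x => x)
| gen_comp f g : gen d Gens f -> gen d Gens g -> gen d Gens (fun x => f (g x))
| gen_inv f h : gen d Gens f -> inW d h -> (forall x, f (h x) = x) -> gen d Gens h
| gen_ext f h : gen d Gens f -> (forall x, f x = h x) -> gen d Gens h.

Definition inLambda (r d : nat) (lam : list nat) : Prop :=
  length lam = (r + 2)%nat /\ list_sum lam = d.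

Definition lamZ (lam : list nat) (i : nat) : Z := Z.of_nat (nth i lam 0%nat).

Definition lam0 (lam : list nat) (i : nat) : Z :=
  Z.of_nat (list_sum (firstn (i + 1) lam)).

Definition Wlam (r d : nat) (lam : list nat) : (Z -> Z) -> Prop :=
  gen (Z.of_nat d)
    (fun g => exists j : Z, 0 <= j <= Z.of_nat d /\
       (forall i : nat, (i <= r)%nat -> j <> lam0 lam i) /\
       g = sref (Z.of_nat d) j).

Definition Rint (r d : nat) (lam : list nat) (i : nat) (x : Z) : Prop :=
  if Nat.eqb i 0 then - lamZ lam 0 <= x <= lamZ lam 0
  else if Nat.eqb i (r + 1) then
    Z.of_nat d + 1 - lamZ lam (r + 1) <= x <= Z.of_nat d + 1 + lamZ lam (r + 1)
  else lam0 lam (i - 1) < x <= lam0 lam i.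

Definition Stab (d : Z) (X : Z -> Prop) (g : Z -> Z) : Prop :=
  inW d g /\
  (forall x, X x -> X (g x)) /\
  (forall y, X y -> exists x, X x /\ g x = y).

From Stdlib Require Import ZArith List Lia Classical FunctionalExtensionality Wf_nat.
Open Scope Z_scope.

(* Each stabiliser is a subgroup of W, and an allowed generator s_j moves only j and j + 1
   (or 1 to -1 when j = 0, d to d + 2 when j = d), which lie in one interval R_i because j is
   not a partial sum lambda_{0,i}; hence W_lambda lies in the intersection.
   Conversely, an element g of the intersection preserves every cut at a partial sum c on the
   window [0..d+1]: k <= c iff g k <= c.  If g j < g (j + 1) at every j in [0..d] that is not
   a cut, then g is strictly increasing on the window and fixes 0 and d + 1, so it is the
   identity.  Otherwise g has a descent g (j + 1) < g j at an allowed j, and g s_j, still in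
   the intersection, has smaller potential sum_{k=1}^d (g k - k)^2; induction on the potential
   writes g as a product of allowed generators. *)

Ltac case_Z_tests :=
  repeat match goal with
  | |- context [?a =? ?b] => destruct (Z.eqb_spec a b)
  | |- context [?a <=? ?b] => destruct (Z.leb_spec a b)
  end.

Lemma strict_incr_fixed_ends (f : Z -> Z) a b :
  (forall j, a <= j < b -> f j < f (j + 1)) -> f a = a -> f b = b ->
  forall k, a <= k <= b -> f k = k.
Proof.
  intros Hinc Ha Hb k Hk.
  assert (Hup : forall n, 0 <= n -> a + n <= b -> a + n <= f (a + n)).
  { apply (natlike_ind (fun n => a + n <= b -> a + n <= f (a + n))).
    { rewrite Z.add_0_r. lia. }
    intros n Hn IH Hle. replace (a + Z.succ n) with (a + n + 1) in * by ring.
    specialize (Hinc (a + n) ltac:(lia)). lia. }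
  assert (Hdown : forall n, 0 <= n -> a <= b - n -> f (b - n) <= b - n).
  { apply (natlike_ind (fun n => a <= b - n -> f (b - n) <= b - n)).
    { rewrite Z.sub_0_r. lia. }
    intros n Hn IH Hle. replace (b - Z.succ n) with (b - n - 1) in * by ring.
    specialize (Hinc (b - n - 1) ltac:(lia)).
    replace (b - n - 1 + 1) with (b - n) in Hinc by ring. lia. }
  specialize (Hup (k - a) ltac:(lia) ltac:(lia)).
  specialize (Hdown (b - k) ltac:(lia) ltac:(lia)).
  replace (a + (k - a)) with k in Hup by ring.
  replace (b - (b - k)) with k in Hdown by ring. lia.
Qed.

Definition periodic_odd (d : Z) (h : Z -> Z) : Prop :=
  (forall i, h (i + DD d) = h i + DD d) /\ (forall i, h (- i) = - h i).

Section PeriodicOdd.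

Variable d : Z.
Hypothesis d_nonneg : 0 <= d.

Lemma DD_pos : 0 < DD d.
Proof. unfold DD; lia. Qed.

Lemma residue_decomp x : exists q r, x = r + q * DD d /\ 0 <= r < DD d.
Proof.
  pose proof DD_pos.
  exists (x / DD d), (x mod DD d). split.
  - pose proof (Z.div_mod x (DD d)). lia.
  - apply Z.mod_pos_bound; lia.
Qed.

Lemma periodic_odd_shift h : periodic_odd d h ->
  forall q x, h (x + q * DD d) = h x + q * DD d.
Proof.
  intros [Hper _] q. induction q using Z.peano_ind; intros x.
  - now rewrite !Z.mul_0_l, !Z.add_0_r.
  - rewrite Z.mul_succ_l, Z.add_assoc, Hper, IHq. ring.
  - rewrite Z.mul_pred_l.
    replace (x + (q * DD d - DD d)) with (x - DD d + q * DD d) by ring.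
    assert (E := Hper (x - DD d)). replace (x - DD d + DD d) with x in E by ring.
    rewrite IHq. lia.
Qed.

Lemma periodic_odd_0 h : periodic_odd d h -> h 0 = 0.
Proof. intros [_ Hodd]. specialize (Hodd 0). simpl in Hodd. lia. Qed.

Lemma periodic_odd_reflect h : periodic_odd d h -> forall y, h (DD d - y) = DD d - h y.
Proof.
  intros [Hper Hodd] y. replace (DD d - y) with (- y + DD d) by ring.
  rewrite Hper, Hodd. ring.
Qed.

Lemma periodic_odd_mid h : periodic_odd d h -> h (d + 1) = d + 1.
Proof.
  intros Hh. pose proof (periodic_odd_reflect h Hh (d + 1)) as E.
  unfold DD in E. replace (2 * d + 2 - (d + 1)) with (d + 1) in E by ring. lia.
Qed.

Lemma periodic_odd_id : periodic_odd d (fun x => x).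
Proof. split; reflexivity. Qed.

Lemma periodic_odd_comp f g :
  periodic_odd d f -> periodic_odd d g -> periodic_odd d (fun x => f (g x)).
Proof.
  intros [Pf Of] [Pg Og]. split; intros i; [rewrite Pg, Pf | rewrite Og, Of]; reflexivity.
Qed.

Lemma periodic_odd_window_ext h1 h2 : periodic_odd d h1 -> periodic_odd d h2 ->
  (forall k, 1 <= k <= d -> h1 k = h2 k) -> forall x, h1 x = h2 x.
Proof.
  intros P1 P2 Hwin x. destruct (residue_decomp x) as (q & r & -> & Hr).
  rewrite (periodic_odd_shift h1 P1), (periodic_odd_shift h2 P2). f_equal.
  unfold DD in Hr.
  destruct (Z.eq_dec r 0) as [->|].
  { now rewrite (periodic_odd_0 h1 P1), (periodic_odd_0 h2 P2). }
  destruct (Z_le_gt_dec r d); [apply Hwin; lia|].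
  destruct (Z.eq_dec r (d + 1)) as [->|].
  { now rewrite (periodic_odd_mid h1 P1), (periodic_odd_mid h2 P2). }
  replace r with (DD d - (DD d - r)) by ring.
  rewrite (periodic_odd_reflect h1 P1), (periodic_odd_reflect h2 P2), Hwin; unfold DD; lia.
Qed.

Definition ext_residue (f : Z -> Z) (r : Z) : Z :=
  if r =? 0 then 0
  else if r <=? d then f r
  else if r =? d + 1 then d + 1
  else DD d - f (DD d - r).

Lemma ext_decomp f q r : 0 <= r < DD d -> ext d f (r + q * DD d) = q * DD d + ext_residue f r.
Proof.
  intros Hr. unfold ext.
  rewrite Z_div_plus_full, Z_mod_plus_full, Z.div_small, Z.mod_small by lia.
  reflexivity.
Qed.

Lemma ext_residue_reflect f r : 0 < r < DD d ->
  ext_residue f (DD d - r) = DD d - ext_residue f r.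
Proof.
  intros Hr. unfold ext_residue. replace (DD d - (DD d - r)) with r by ring.
  unfold DD in *. case_Z_tests; lia.
Qed.

Lemma ext_window f k : 1 <= k <= d -> ext d f k = f k.
Proof.
  intros Hk. replace k with (k + 0 * DD d) at 1 by ring.
  rewrite ext_decomp by (unfold DD; lia). unfold ext_residue. case_Z_tests; lia.
Qed.

Lemma ext_periodic_odd f : periodic_odd d (ext d f).
Proof.
  pose proof DD_pos.
  split; intros x; destruct (residue_decomp x) as (q & r & -> & Hr).
  - replace (r + q * DD d + DD d) with (r + (q + 1) * DD d) by ring.
    rewrite !ext_decomp by lia. ring.
  - destruct (Z.eq_dec r 0) as [->|Hr0].
    + replace (- (0 + q * DD d)) with (0 + - q * DD d) by ring.
      rewrite !ext_decomp by lia. unfold ext_residue; simpl. ring.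
    + replace (- (r + q * DD d)) with ((DD d - r) + (- q - 1) * DD d) by ring.
      rewrite !ext_decomp, ext_residue_reflect by lia. ring.
Qed.

End PeriodicOdd.

Fixpoint sum_1_n (f : Z -> Z) (n : nat) : Z :=
  match n with
  | O => 0
  | S m => sum_1_n f m + f (Z.of_nat (S m))
  end.

Lemma sum_1_n_ext f h n : (forall k, 1 <= k <= Z.of_nat n -> f k = h k) ->
  sum_1_n f n = sum_1_n h n.
Proof.
  induction n as [|n IH]; intros E; cbn [sum_1_n]; [reflexivity|].
  rewrite IH, E; [reflexivity | lia |]. intros k Hk. apply E; lia.
Qed.

Lemma sum_1_n_nonneg f n : (forall k, 0 <= f k) -> 0 <= sum_1_n f n.
Proof.
  intros H. induction n as [|n IH]; cbn [sum_1_n]; [lia|].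
  specialize (H (Z.of_nat (S n))). lia.
Qed.

Lemma sum_1_n_update f h a n : 1 <= a <= Z.of_nat n ->
  (forall k, 1 <= k <= Z.of_nat n -> k <> a -> f k = h k) ->
  sum_1_n f n = sum_1_n h n + (f a - h a).
Proof.
  induction n as [|n IH]; intros Ha E; [lia|]. cbn [sum_1_n].
  destruct (Z.eq_dec a (Z.of_nat (S n))) as [->|].
  - rewrite (sum_1_n_ext f h n); [ring|]. intros k Hk. apply E; lia.
  - rewrite IH, (E (Z.of_nat (S n))); [ring | lia | lia | lia |].
    intros k Hk Hka. apply E; lia.
Qed.

Lemma sum_1_n_update2 f h a b n : a <> b ->
  1 <= a <= Z.of_nat n -> 1 <= b <= Z.of_nat n ->
  (forall k, 1 <= k <= Z.of_nat n -> k <> a -> k <> b -> f k = h k) ->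
  sum_1_n f n = sum_1_n h n + (f a - h a) + (f b - h b).
Proof.
  intros Hab Ha Hb E.
  set (m := fun k => if k =? b then h b else f k).
  rewrite (sum_1_n_update f m b n), (sum_1_n_update m h a n); try assumption.
  - unfold m. rewrite Z.eqb_refl. destruct (Z.eqb_spec a b); [lia|]. ring.
  - intros k Hk Hka. unfold m. destruct (Z.eqb_spec k b) as [->|]; auto.
  - intros k Hk Hkb. unfold m. destruct (Z.eqb_spec k b); [lia|reflexivity].
Qed.

Lemma inW_periodic_odd d g : inW d g -> periodic_odd d g.
Proof. intros (_ & _ & Hper & Hodd). split; assumption. Qed.

Lemma inW_of_involution d s :
  periodic_odd d s -> (forall x, s (s x) = x) -> inW d s.
Proof.
  intros [Hper Hodd] Hinv. split; [|split; [|split]]; auto.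
  - intros x y E. now rewrite <- (Hinv x), <- (Hinv y), E.
  - intros y. exists (s y). apply Hinv.
Qed.

Lemma inW_comp d f g : inW d f -> inW d g -> inW d (fun x => f (g x)).
Proof.
  intros (If & Sf & Pf & Of) (Ig & Sg & Pg & Og). split; [|split; [|split]].
  - intros x y E. apply Ig, If, E.
  - intros y. destruct (Sf y) as [z <-]. destruct (Sg z) as [w <-]. now exists w.
  - intros i. now rewrite Pg, Pf.
  - intros i. now rewrite Og, Of.
Qed.

Section Stabilisers.

Variables (d : Z) (X : Z -> Prop).

Lemma Stab_of_involution s : periodic_odd d s -> (forall x, s (s x) = x) ->
  (forall x, X x -> X (s x)) -> Stab d X s.
Proof.
  intros Hs Hinv HX. split; [apply inW_of_involution; auto|split; auto].
  intros y Hy. exists (s y). auto.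
Qed.

Lemma Stab_id : Stab d X (fun x => x).
Proof. apply Stab_of_involution; auto. apply periodic_odd_id. Qed.

Lemma Stab_comp f g : Stab d X f -> Stab d X g -> Stab d X (fun x => f (g x)).
Proof.
  intros (Wf & Af & Bf) (Wg & Ag & Bg). split; [apply inW_comp; auto|split; auto].
  intros y Hy. destruct (Bf y Hy) as (z & Hz & <-). destruct (Bg z Hz) as (w & Hw & <-).
  now exists w.
Qed.

Lemma Stab_inv f h : Stab d X f -> inW d h -> (forall x, f (h x) = x) -> Stab d X h.
Proof.
  intros ((Inj & _) & Af & Bf) Wh Hfh.
  assert (Hhf : forall x, h (f x) = x) by (intros x; apply Inj; now rewrite Hfh).
  split; [assumption|split].
  - intros x Hx. destruct (Bf x Hx) as (x' & Hx' & <-). now rewrite Hhf.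
  - intros y Hy. exists (f y). auto.
Qed.

Lemma Stab_ext f h : Stab d X f -> (forall x, f x = h x) -> Stab d X h.
Proof. intros Hf E. now replace h with f by (apply functional_extensionality; auto). Qed.

End Stabilisers.

Section SimpleReflections.

Variable d : Z.
Hypothesis d_pos : 1 <= d.

Lemma sref_periodic_odd j : periodic_odd d (sref d j).
Proof.
  unfold sref. destruct (j =? 0); [|destruct (j =? d)]; apply ext_periodic_odd; lia.
Qed.

Lemma sref_0_window k : 1 <= k <= d -> sref d 0 k = if k =? 1 then -1 else k.
Proof. intros Hk. unfold sref. simpl. now rewrite ext_window. Qed.

Lemma sref_d_window k : 1 <= k <= d -> sref d d k = if k =? d then d + 2 else k.
Proof.
  intros Hk. unfold sref. destruct (Z.eqb_spec d 0); [lia|].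
  now rewrite Z.eqb_refl, ext_window.
Qed.

Lemma sref_mid_window j k : 1 <= j < d -> 1 <= k <= d ->
  sref d j k = if k =? j then j + 1 else if k =? j + 1 then j else k.
Proof.
  intros Hj Hk. unfold sref. destruct (Z.eqb_spec j 0), (Z.eqb_spec j d); try lia.
  now rewrite ext_window.
Qed.

Lemma sref_window_cases j k : 0 <= j <= d -> 1 <= k <= d ->
  sref d j k = k \/
  (j = 0 /\ k = 1 /\ sref d j k = -1) \/
  (1 <= j < d /\ k = j /\ sref d j k = j + 1) \/
  (1 <= j < d /\ k = j + 1 /\ sref d j k = j) \/
  (j = d /\ k = d /\ sref d j k = d + 2).
Proof.
  intros Hj Hk.
  destruct (Z.eq_dec j 0) as [->|]; [|destruct (Z.eq_dec j d) as [->|]].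
  - rewrite sref_0_window by lia. case_Z_tests; lia.
  - rewrite sref_d_window by lia. case_Z_tests; lia.
  - rewrite sref_mid_window by lia. case_Z_tests; lia.
Qed.

Lemma sref_involutive j : 0 <= j <= d -> forall x, sref d j (sref d j x) = x.
Proof.
  intros Hj. pose proof (sref_periodic_odd j) as Hs.
  apply (periodic_odd_window_ext d ltac:(lia));
    [apply periodic_odd_comp; assumption | apply periodic_odd_id |].
  intros k Hk.
  destruct (sref_window_cases j k Hj Hk)
    as [E|[(-> & -> & E)|[(? & -> & E)|[(? & -> & E)|(-> & -> & E)]]]]; rewrite E.
  - exact E.
  - replace (-1) with (- (1)) by reflexivity. now rewrite (proj2 Hs), E.
  - rewrite sref_mid_window by lia. case_Z_tests; lia.
  - rewrite sref_mid_window by lia. case_Z_tests; lia.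
  - replace (d + 2) with (DD d - d) by (unfold DD; ring).
    rewrite (periodic_odd_reflect d (sref d d) Hs), E. unfold DD; ring.
Qed.

Definition potential (g : Z -> Z) : Z :=
  sum_1_n (fun k => (g k - k) ^ 2) (Z.to_nat d).

Lemma potential_nonneg g : 0 <= potential g.
Proof. apply sum_1_n_nonneg. intros k. apply Z.pow_even_nonneg. now exists 1. Qed.

Lemma potential_descent g j : periodic_odd d g -> 0 <= j <= d ->
  g (j + 1) < g j -> potential (fun x => g (sref d j x)) < potential g.
Proof.
  (* The potential drops by - 4 g 1, by 4 (g d - d - 1), resp. by 2 (g j - g (j + 1)). *)
  intros Hg Hj Hdesc. unfold potential.
  destruct (Z.eq_dec j 0) as [->|Hj0]; [|destruct (Z.eq_dec j d) as [->|Hjd]].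
  - rewrite (sum_1_n_update _ (fun k => (g k - k) ^ 2) 1); [|lia|].
    2: intros k Hk Hk1; rewrite sref_0_window by lia; now case_Z_tests.
    rewrite sref_0_window, Z.eqb_refl by lia.
    replace (-1) with (- (1)) by reflexivity. rewrite (proj2 Hg).
    rewrite (periodic_odd_0 d g Hg), Z.add_0_l in Hdesc. nia.
  - rewrite (sum_1_n_update _ (fun k => (g k - k) ^ 2) d); [|lia|].
    2: intros k Hk Hkd; rewrite sref_d_window by lia; now case_Z_tests.
    rewrite sref_d_window, Z.eqb_refl by lia.
    replace (d + 2) with (DD d - d) by (unfold DD; ring).
    rewrite (periodic_odd_reflect d g Hg), (periodic_odd_mid d g Hg) in *.
    unfold DD. nia.
  - rewrite (sum_1_n_update2 _ (fun k => (g k - k) ^ 2) j (j + 1)); try lia.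
    2: intros k Hk Hkj Hkj1; rewrite sref_mid_window by lia; now case_Z_tests.
    rewrite !sref_mid_window by lia. case_Z_tests; nia.
Qed.

End SimpleReflections.

Lemma list_sum_firstn_S (l : list nat) n :
  list_sum (firstn (S n) l) = (list_sum (firstn n l) + nth n l 0)%nat.
Proof.
  revert n; induction l as [|a l IH]; intros n; [destruct n; reflexivity|].
  destruct n as [|n]; [simpl; lia|].
  change (a + list_sum (firstn (S n) l) = a + list_sum (firstn n l) + nth n l 0)%nat.
  rewrite IH. lia.
Qed.

Lemma lam0_0 lam : lam0 lam 0 = lamZ lam 0.
Proof. unfold lam0, lamZ. simpl plus. rewrite list_sum_firstn_S. simpl. lia. Qed.

Lemma lam0_S lam i : lam0 lam (S i) = lam0 lam i + lamZ lam (S i).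
Proof.
  unfold lam0, lamZ. replace (S i + 1)%nat with (S (i + 1)) by lia.
  rewrite list_sum_firstn_S. replace (i + 1)%nat with (S i) by lia. lia.
Qed.

Lemma lam0_nonneg lam i : 0 <= lam0 lam i.
Proof. unfold lam0. lia. Qed.

Lemma lam0_mono lam i j : (i <= j)%nat -> lam0 lam i <= lam0 lam j.
Proof.
  induction 1 as [|j _ IH]; [lia|].
  rewrite lam0_S. unfold lamZ. lia.
Qed.

Lemma lam0_bracket lam k n : lam0 lam 0 < k <= lam0 lam n ->
  exists i, (1 <= i <= n)%nat /\ lam0 lam (i - 1) < k <= lam0 lam i.
Proof.
  induction n as [|n IH]; intros Hk; [lia|].
  destruct (Z_le_gt_dec k (lam0 lam n)).
  - destruct IH as (i & Hi & Hki); [lia|]. exists i. split; [lia | assumption].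
  - exists (S n). replace (S n - 1)%nat with n by lia. split; [lia|]. lia.
Qed.

Definition avoids_partial_sums (r : nat) (lam : list nat) (j : Z) : Prop :=
  forall i, (i <= r)%nat -> j <> lam0 lam i.

Section Intervals.

Variables (r d : nat) (lam : list nat).
Hypothesis lam_in : inLambda r d lam.

Lemma lam0_last : lam0 lam r + lamZ lam (r + 1) = Z.of_nat d.
Proof.
  destruct lam_in as [Hlen Hsum]. replace (r + 1)%nat with (S r) by lia.
  rewrite <- lam0_S. unfold lam0. rewrite firstn_all2 by lia. lia.
Qed.

Lemma lam0_le_d i : (i <= r)%nat -> lam0 lam i <= Z.of_nat d.
Proof.
  intros Hi. pose proof lam0_last. pose proof (lam0_mono lam i r Hi).
  unfold lamZ in *. lia.
Qed.

Lemma Rint_0_iff x : Rint r d lam 0 x <-> - lam0 lam 0 <= x <= lam0 lam 0.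
Proof. rewrite lam0_0. reflexivity. Qed.

Lemma Rint_mid_iff i x : (1 <= i <= r)%nat ->
  Rint r d lam i x <-> lam0 lam (i - 1) < x <= lam0 lam i.
Proof.
  intros Hi. unfold Rint.
  destruct (Nat.eqb_spec i 0), (Nat.eqb_spec i (r + 1)); [lia..|reflexivity].
Qed.

Lemma Rint_last_iff x :
  Rint r d lam (r + 1) x <-> lam0 lam r < x < DD (Z.of_nat d) - lam0 lam r.
Proof.
  unfold Rint. destruct (Nat.eqb_spec (r + 1) 0); [lia|]. rewrite Nat.eqb_refl.
  pose proof lam0_last. unfold DD. lia.
Qed.

Lemma Rint_cases i : (i <= r + 1)%nat ->
  (i = 0%nat /\ forall x, Rint r d lam i x <-> - lam0 lam 0 <= x <= lam0 lam 0) \/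
  ((1 <= i <= r)%nat /\ forall x, Rint r d lam i x <-> lam0 lam (i - 1) < x <= lam0 lam i) \/
  (i = (r + 1)%nat /\
     forall x, Rint r d lam i x <-> lam0 lam r < x < DD (Z.of_nat d) - lam0 lam r).
Proof.
  intros Hi. destruct (Nat.eq_dec i 0) as [->|].
  { left. split; [reflexivity | apply Rint_0_iff]. }
  right. destruct (Nat.eq_dec i (r + 1)) as [->|].
  - right. split; [reflexivity | apply Rint_last_iff].
  - left. split; [lia|]. intros x. apply Rint_mid_iff. lia.
Qed.

Lemma Rint_cover k : 1 <= k <= Z.of_nat d -> exists i, (i <= r + 1)%nat /\ Rint r d lam i k.
Proof.
  intros Hk. destruct (Z_le_gt_dec k (lam0 lam 0)).
  { exists 0%nat. split; [lia|]. apply Rint_0_iff. lia. }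
  destruct (Z_le_gt_dec k (lam0 lam r)).
  - destruct (lam0_bracket lam k r) as (i & Hi & Hki); [lia|].
    exists i. split; [lia|]. now apply Rint_mid_iff.
  - exists (r + 1)%nat. split; [lia|]. apply Rint_last_iff.
    pose proof (lam0_le_d r (le_n r)). unfold DD. lia.
Qed.

Lemma Rint_one_side i j : (i <= r)%nat -> (j <= r + 1)%nat ->
  (forall x, Rint r d lam j x -> x <= lam0 lam i) \/
  (forall x, Rint r d lam j x -> lam0 lam i < x).
Proof.
  intros Hi Hj. destruct (Rint_cases j Hj) as [[-> E]|[[Hj' E]|[-> E]]].
  - left. intros x Hx%E. pose proof (lam0_mono lam 0 i ltac:(lia)). lia.
  - destruct (Nat.le_gt_cases j i).
    + left. intros x Hx%E. pose proof (lam0_mono lam j i ltac:(lia)). lia.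
    + right. intros x Hx%E. pose proof (lam0_mono lam i (j - 1) ltac:(lia)). lia.
  - right. intros x Hx%E. pose proof (lam0_mono lam i r Hi). lia.
Qed.

Definition preserves_Rint_window (g : Z -> Z) : Prop :=
  forall i, (i <= r + 1)%nat ->
    forall k, 1 <= k <= Z.of_nat d -> Rint r d lam i k -> Rint r d lam i (g k).

Lemma periodic_odd_preserves_Rint g :
  periodic_odd (Z.of_nat d) g -> preserves_Rint_window g ->
  forall i, (i <= r + 1)%nat -> forall x, Rint r d lam i x -> Rint r d lam i (g x).
Proof.
  intros Hg Hw i Hi x Hx. specialize (Hw i Hi).
  destruct (Rint_cases i Hi) as [[-> E]|[[Hi' E]|[-> E]]];
    rewrite E in Hx |- *; setoid_rewrite E in Hw.
  - pose proof (lam0_le_d 0 ltac:(lia)).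
    destruct (Z.lt_trichotomy x 0) as [Hneg|[->|Hpos]].
    + replace x with (- (- x)) by ring. rewrite (proj2 Hg).
      specialize (Hw (- x) ltac:(lia) ltac:(lia)). lia.
    + rewrite (periodic_odd_0 _ g Hg). lia.
    + apply Hw; lia.
  - pose proof (lam0_nonneg lam (i - 1)). pose proof (lam0_le_d i ltac:(lia)).
    apply Hw; lia.
  - pose proof (lam0_nonneg lam r).
    destruct (Z_le_gt_dec x (Z.of_nat d)); [apply Hw; lia|].
    destruct (Z.eq_dec x (Z.of_nat d + 1)) as [->|].
    + rewrite (periodic_odd_mid _ g Hg). lia.
    + replace x with (DD (Z.of_nat d) - (DD (Z.of_nat d) - x)) by ring.
      rewrite (periodic_odd_reflect _ g Hg).
      specialize (Hw (DD (Z.of_nat d) - x)). unfold DD in *. lia.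
Qed.

Lemma preserves_cuts g : periodic_odd (Z.of_nat d) g -> preserves_Rint_window g ->
  forall i k, (i <= r)%nat -> 0 <= k <= Z.of_nat d + 1 ->
  (g k <= lam0 lam i <-> k <= lam0 lam i).
Proof.
  intros Hg Hw i k Hi Hk.
  pose proof (lam0_nonneg lam i). pose proof (lam0_le_d i Hi).
  destruct (Z.eq_dec k 0) as [->|]; [rewrite (periodic_odd_0 _ g Hg); lia|].
  destruct (Z.eq_dec k (Z.of_nat d + 1)) as [->|]; [rewrite (periodic_odd_mid _ g Hg); lia|].
  destruct (Rint_cover k) as (j & Hj & Hkj); [lia|].
  pose proof (Hw j Hj k ltac:(lia) Hkj) as Hgkj.
  destruct (Rint_one_side i j Hi Hj) as [Side|Side];
    pose proof (Side _ Hkj); pose proof (Side _ Hgkj); lia.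
Qed.

Hypothesis d_pos : (1 <= d)%nat.

Lemma sref_preserves_Rint_window j : 0 <= j <= Z.of_nat d -> avoids_partial_sums r lam j ->
  preserves_Rint_window (sref (Z.of_nat d) j).
Proof.
  intros Hj Hav i Hi k Hk Hik.
  pose proof (Hav 0%nat ltac:(lia)). pose proof (Hav r ltac:(lia)).
  pose proof (lam0_nonneg lam r). pose proof (lam0_le_d 0 ltac:(lia)).
  destruct (Rint_cases i Hi) as [[-> E]|[[Hi' E]|[-> E]]]; rewrite E in Hik |- *.
  2: pose proof (Hav i ltac:(lia)); pose proof (Hav (i - 1)%nat ltac:(lia));
     pose proof (lam0_nonneg lam (i - 1)); pose proof (lam0_le_d i ltac:(lia)).
  all: destruct (sref_window_cases (Z.of_nat d) ltac:(lia) j k Hj Hk)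
      as [F|[(? & ? & F)|[(? & ? & F)|[(? & ? & F)|(? & ? & F)]]]];
    rewrite F; unfold DD; lia.
Qed.

Definition StabAll (g : Z -> Z) : Prop :=
  forall i, (i <= r + 1)%nat -> Stab (Z.of_nat d) (Rint r d lam i) g.

Lemma StabAll_periodic_odd g : StabAll g -> periodic_odd (Z.of_nat d) g.
Proof. intros Hg. apply inW_periodic_odd, (Hg 0%nat ltac:(lia)). Qed.

Lemma StabAll_preserves_Rint_window g : StabAll g -> preserves_Rint_window g.
Proof. intros Hg i Hi k _ Hk. now apply Hg. Qed.

Lemma StabAll_sref j : 0 <= j <= Z.of_nat d -> avoids_partial_sums r lam j ->
  StabAll (sref (Z.of_nat d) j).
Proof.
  intros Hj Hav i Hi. apply Stab_of_involution.
  - apply sref_periodic_odd. lia.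
  - apply sref_involutive; lia.
  - apply periodic_odd_preserves_Rint; [apply sref_periodic_odd; lia | | assumption].
    now apply sref_preserves_Rint_window.
Qed.

Lemma Wlam_StabAll g : Wlam r d lam g -> StabAll g.
Proof.
  induction 1 as [g (j & Hj & Hav & ->)| | | |]; intros i Hi.
  - now apply StabAll_sref.
  - apply Stab_id.
  - apply Stab_comp; auto.
  - eapply Stab_inv; eauto.
  - eapply Stab_ext; eauto.
Qed.

Lemma StabAll_no_descent_id g : StabAll g ->
  (forall j, 0 <= j <= Z.of_nat d -> avoids_partial_sums r lam j -> g j <= g (j + 1)) ->
  forall x, g x = x.
Proof.
  intros Hg Hnd.
  pose proof (StabAll_periodic_odd g Hg) as Hpo.
  pose proof (preserves_cuts g Hpo (StabAll_preserves_Rint_window g Hg)) as Hcut.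
  destruct (Hg 0%nat ltac:(lia)) as [[Hinj _] _].
  assert (Hincr : forall j, 0 <= j < Z.of_nat d + 1 -> g j < g (j + 1)).
  { intros j Hj.
    destruct (classic (exists i, (i <= r)%nat /\ j = lam0 lam i)) as [(i & Hi & ->)|Hnot].
    - pose proof (lam0_nonneg lam i). pose proof (lam0_le_d i Hi).
      pose proof (Hcut i (lam0 lam i) Hi ltac:(lia)).
      pose proof (Hcut i (lam0 lam i + 1) Hi ltac:(lia)). lia.
    - assert (g j <> g (j + 1)) by (intros E; apply Hinj in E; lia).
      enough (g j <= g (j + 1)) by lia.
      apply Hnd; [lia|]. intros i Hi E. apply Hnot. eauto. }
  apply (periodic_odd_window_ext (Z.of_nat d) ltac:(lia) g (fun x => x) Hpo
           (periodic_odd_id _)).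
  intros k Hk. apply (strict_incr_fixed_ends g 0 (Z.of_nat d + 1)); [assumption | | | lia].
  - exact (periodic_odd_0 _ g Hpo).
  - exact (periodic_odd_mid _ g Hpo).
Qed.

Lemma StabAll_Wlam g : StabAll g -> Wlam r d lam g.
Proof.
  induction g as [g IH] using
    (well_founded_ind (well_founded_ltof _ (fun g => Z.to_nat (potential (Z.of_nat d) g)))).
  intros Hg.
  destruct (classic (exists j, 0 <= j <= Z.of_nat d /\ avoids_partial_sums r lam j /\
                               g (j + 1) < g j)) as [(j & Hj & Hav & Hdesc)|Hnd].
  - assert (Hgs : Wlam r d lam (fun x => g (sref (Z.of_nat d) j x))).
    { apply IH.
      - unfold ltof.
        pose proof (potential_nonneg (Z.of_nat d) (fun x => g (sref (Z.of_nat d) j x))).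
        pose proof (potential_descent (Z.of_nat d) ltac:(lia) g j
                      (StabAll_periodic_odd g Hg) Hj Hdesc).
        lia.
      - intros i Hi. apply Stab_comp; [now apply Hg | now apply StabAll_sref]. }
    apply (gen_ext _ _ (fun x => g (sref (Z.of_nat d) j (sref (Z.of_nat d) j x)))).
    + apply (gen_comp _ _ _ _ Hgs), gen_gen. now exists j.
    + intros x. now rewrite sref_involutive by lia.
  - apply (gen_ext _ _ (fun x => x)); [apply gen_id|].
    intros x. symmetry. apply StabAll_no_descent_id; [assumption|].
    intros j Hj Hav. apply Z.nlt_ge. intros Hdesc. apply Hnd. eauto.
Qed.

End Intervals.

Theorem lemma2p2p1 (r d : nat) (lam : list nat) :
  (2 <= d)%nat -> inLambda r d lam ->
  forall g : Z -> Z,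
    Wlam r d lam g <->
    (forall i : nat, (i <= r + 1)%nat -> Stab (Z.of_nat d) (Rint r d lam i) g).
Proof.
  intros Hd Hlam g. split.
  - apply (Wlam_StabAll r d lam Hlam ltac:(lia)).
  - apply (StabAll_Wlam r d lam Hlam ltac:(lia)).
Qed.
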